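(* Assume $\mathbb F$ is algebraically closed with $\operatorname{char}\mathbb F=0$. There is a five-dimensional $\Re$-module $V$ with basis $v_0,\dots,v_4$ on which $A,B,C,D$ are represented by $\tfrac14$ times the matrices $\begin{pmatrix}15&0&0&0&0\\4&3&0&0&0\\0&4&-1&0&0\\0&0&4&3&0\\0&0&0&4&15\end{pmatrix}$, $\begin{pmatrix}15&-36&0&0&0\\0&3&-6&0&0\\0&0&-1&-6&0\\0&0&0&3&-36\\0&0&0&0&15\end{pmatrix}$, $\begin{pmatrix}-9&36&0&0&0\\-4&15&6&0&0\\0&-4&23&6&0\\0&0&-4&15&36\\0&0&0&-4&-9\end{pmatrix}$, $\begin{pmatrix}18&-54&0&0&0\\6&-15&-3&0&0\\0&2&0&3&0\\0&0&-2&15&54\\0&0&0&-6&-18\end{pmatrix}$ respectively. On $V$ one has $\alpha=\beta=\gamma=0$, $V$ is irreducible, and each of $A,B,C$ has minimal polynomial $(x+\tfrac14)(x-\tfrac34)^2(x-\tfrac{15}4)^2$ on $V$; in particular none of $A,B,C$ is diagonalizable on $V$.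
   Context: The Racah algebra $\Re$ is the unital associative $\mathbb F$-algebra with generators $A,B,C,D$ and relations $[A,B]=[B,C]=[C,A]=2D$ together with the requirement that each of $\alpha:=[A,D]+AC-BA$, $\beta:=[B,D]+BA-CB$, $\gamma:=[C,D]+CB-AC$ is central in $\Re$. Matrices act on column coordinate vectors with respect to the basis $v_0,\dots,v_4$ (the $j$-th column gives the image of $v_j$). *)

From HB Require Import structures.
From mathcomp Require Import all_boot all_order all_algebra.
Set Implicit Arguments. Unset Strict Implicit. Unset Printing Implicit Defensive.
Import Order.TTheory GRing.Theory Num.Theory.
Local Open Scope ring_scope.

(* Convention: an operator on V = F^5 with basis v_0..v_4 is represented by the
   matrix M : 'M[F]_5 acting on COLUMN coordinate vectors (w |-> M *m w);
   entry M i j is the coefficient of v_i in the image of v_j (the j-th column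
   gives the image of v_j). *)

Definition quarter_mx (F : fieldType) (rows : seq (seq int)) : 'M[F]_5 :=
  \matrix_(i < 5, j < 5) (((nth [::] rows i)`_j)%:~R / 4%:R).

Definition mxA (F : fieldType) : 'M[F]_5 := quarter_mx F
  [:: [:: 15; 0; 0; 0; 0];
      [:: 4; 3; 0; 0; 0];
      [:: 0; 4; -1; 0; 0];
      [:: 0; 0; 4; 3; 0];
      [:: 0; 0; 0; 4; 15]].

Definition mxB (F : fieldType) : 'M[F]_5 := quarter_mx F
  [:: [:: 15; -36; 0; 0; 0];
      [:: 0; 3; -6; 0; 0];
      [:: 0; 0; -1; -6; 0];
      [:: 0; 0; 0; 3; -36];
      [:: 0; 0; 0; 0; 15]].

Definition mxC (F : fieldType) : 'M[F]_5 := quarter_mx F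
  [:: [:: -9; 36; 0; 0; 0];
      [:: -4; 15; 6; 0; 0];
      [:: 0; -4; 23; 6; 0];
      [:: 0; 0; -4; 15; 36];
      [:: 0; 0; 0; -4; -9]].

Definition mxD (F : fieldType) : 'M[F]_5 := quarter_mx F
  [:: [:: 18; -54; 0; 0; 0];
      [:: 6; -15; -3; 0; 0];
      [:: 0; 2; 0; 3; 0];
      [:: 0; 0; -2; 15; 54];
      [:: 0; 0; 0; -6; -18]].

Definition comm_op (R : pzRingType) (n : nat) (X Y : 'M[R]_n) : 'M[R]_n :=
  X *m Y - Y *m X.

Definition racah_alpha (R : pzRingType) n (A B C D : 'M[R]_n) : 'M[R]_n :=
  comm_op A D + A *m C - B *m A.
Definition racah_beta (R : pzRingType) n (A B C D : 'M[R]_n) : 'M[R]_n :=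
  comm_op B D + B *m A - C *m B.
Definition racah_gamma (R : pzRingType) n (A B C D : 'M[R]_n) : 'M[R]_n :=
  comm_op C D + C *m B - A *m C.

Definition central_in (R : pzRingType) n (A B C D X : 'M[R]_n) : Prop :=
  [/\ comm_op X A = 0, comm_op X B = 0, comm_op X C = 0 & comm_op X D = 0].

Definition racah_module (R : pzRingType) n (A B C D : 'M[R]_n) : Prop :=
  [/\ comm_op A B = 2%:R *: D, comm_op B C = 2%:R *: D
    & comm_op C A = 2%:R *: D] /\
  [/\ central_in A B C D (racah_alpha A B C D),
      central_in A B C D (racah_beta A B C D)
    & central_in A B C D (racah_gamma A B C D)].

(* A subspace W of column vectors is encoded by a matrix U whose row space is
   {w^T | w in W}.  W is invariant under the operator M (w in W -> M w in W)
   iff the row space of U is stable under M^T. *)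
Definition op_invariant (F : fieldType) n (U M : 'M[F]_n) : bool :=
  (U *m M^T <= U)%MS.

Definition racah_irreducible (F : fieldType) n (A B C D : 'M[F]_n) : Prop :=
  (0 < n)%N /\
  forall U : 'M[F]_n,
    op_invariant U A -> op_invariant U B -> op_invariant U C ->
    op_invariant U D -> U == 0 \/ row_full U.

Definition racah_minpoly (F : fieldType) : {poly F} :=
  ('X + (1 / 4%:R)%:P) * ('X - (3%:R / 4%:R)%:P) ^+ 2
    * ('X - (15%:R / 4%:R)%:P) ^+ 2.

From mathcomp Require Import all_boot all_order all_algebra ring.
Set Implicit Arguments. Unset Strict Implicit. Unset Printing Implicit Defensive.
Import GRing.Theory.
Local Open Scope ring_scope.

(* Each of A, B, C, D is a quarter of an integer matrix, and every identity to
   be checked (the defining relations, alpha = beta = gamma = 0, the vanishing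
   of the given quintic at A, B, C) is homogeneous, so it reduces to an
   identity between integer matrices, decided by computation.
   The quintic is the minimal polynomial because A and C have the cyclic
   vector v_0 and B has the cyclic vector v_4: the Krylov matrices are
   invertible, so no polynomial of degree < 5 kills them.  Its square factor
   (x - 3/4)^2 rules out diagonalizability.
   An invariant subspace is a row space stable under A^T and B^T.  A product of
   shifts of B^T is a nonzero multiple of the matrix unit E_40, and shifts of
   A^T move that unit down the first column and along the first row; hence the
   subspace is stable under every matrix unit, so it is 0 or everything. *)

(* Integer matrices as lists of rows, so that [vm_compute] can decide
   identities between concrete ones.  Such identities are stated with the
   boolean [==]: integers are unary, and a computation that only returns
   [true] avoids reading back large normal forms. *)
Definition seqmx := seq (seq int).

Definition seqmx_get (l : seqmx) (i j : nat) : int := nth 0 (nth [::] l i) j.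

Definition seqmx_of m n (f : nat -> nat -> int) : seqmx :=
  mkseq (fun i => mkseq (f i) n) m.

Lemma seqmx_get_of m n f i j :
  (i < m)%N -> (j < n)%N -> seqmx_get (seqmx_of m n f) i j = f i j.
Proof. by move=> lt_im lt_jn; rewrite /seqmx_get !nth_mkseq. Qed.

Definition seqmx0 m n : seqmx := seqmx_of m n (fun _ _ => 0).
Definition seqmx_add m n (l1 l2 : seqmx) : seqmx :=
  seqmx_of m n (fun i j => seqmx_get l1 i j + seqmx_get l2 i j).
Definition seqmx_sub m n (l1 l2 : seqmx) : seqmx :=
  seqmx_of m n (fun i j => seqmx_get l1 i j - seqmx_get l2 i j).
Definition seqmx_scale m n (c : int) (l : seqmx) : seqmx :=
  seqmx_of m n (fun i j => c * seqmx_get l i j).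
Definition seqmx_mul m k n (l1 l2 : seqmx) : seqmx := seqmx_of m n (fun i j =>
  foldr (fun t s => seqmx_get l1 i t * seqmx_get l2 t j + s) 0 (iota 0 k)).
Definition seqmx_tr m n (l : seqmx) : seqmx :=
  seqmx_of n m (fun i j => seqmx_get l j i).
Definition seqmx_scalar n (c : nat) : seqmx :=
  seqmx_of n n (fun i j => if i == j then c%:Z else 0).
Definition seqmx_addc n (l : seqmx) (c : nat) : seqmx :=
  seqmx_add n n l (seqmx_scalar n c).
Definition seqmx_subc n (l : seqmx) (c : nat) : seqmx :=
  seqmx_sub n n l (seqmx_scalar n c).
Definition seqmx_delta m n (a b : nat) (c : int) : seqmx :=
  seqmx_of m n (fun i j => if (i == a) && (j == b) then c else 0).
Definition seqmx_antidiag n : seqmx :=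
  seqmx_of n n (fun i j => if (i + j == n.-1)%N then 1 else 0).

Definition seqmx_krylov n (L Lv : seqmx) : seqmx :=
  seqmx_of n n (fun i j => seqmx_get (iter i (seqmx_mul n n 1 L) Lv) j 0).

Definition seqmx_lower_nz n (l : seqmx) : bool :=
  all (fun i => (seqmx_get l i i != 0) &&
                all (fun j => (i < j)%N ==> (seqmx_get l i j == 0)) (iota 0 n))
      (iota 0 n).

Definition mx_of_seqmx (R : pzRingType) m n (l : seqmx) : 'M[R]_(m, n) :=
  \matrix_(i, j) (seqmx_get l i j)%:~R.
Arguments mx_of_seqmx {R m n} l.

Section SeqmxMorphism.
Variable R : pzRingType.
Implicit Types l : seqmx.
Local Notation mx := (@mx_of_seqmx R _ _).

Lemma mx_of_seqmx0 m n : mx (seqmx0 m n) = 0 :> 'M_(m, n).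
Proof. by apply/matrixP=> i j; rewrite !mxE seqmx_get_of. Qed.

Lemma mx_of_seqmx_eq0 m n l : l == seqmx0 m n -> mx l = 0 :> 'M_(m, n).
Proof. by move/eqP->; apply: mx_of_seqmx0. Qed.

Lemma mx_of_seqmxD m n l1 l2 :
  mx (seqmx_add m n l1 l2) = mx l1 + mx l2 :> 'M_(m, n).
Proof. by apply/matrixP=> i j; rewrite !mxE seqmx_get_of // intrD. Qed.

Lemma mx_of_seqmxB m n l1 l2 :
  mx (seqmx_sub m n l1 l2) = mx l1 - mx l2 :> 'M_(m, n).
Proof. by apply/matrixP=> i j; rewrite !mxE seqmx_get_of // intrB. Qed.

Lemma mx_of_seqmxZ m n c l :
  mx (seqmx_scale m n c l) = c%:~R *: mx l :> 'M_(m, n).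
Proof. by apply/matrixP=> i j; rewrite !mxE seqmx_get_of // intrM. Qed.

Lemma mx_of_seqmxM m k n l1 l2 :
  mx (seqmx_mul m k n l1 l2) = (mx l1 : 'M_(m, k)) *m mx l2 :> 'M_(m, n).
Proof.
apply/matrixP=> i j; rewrite !mxE seqmx_get_of //; under eq_bigr do rewrite !mxE.
rewrite -(big_mkord xpredT (fun t => (seqmx_get l1 i t)%:~R * (seqmx_get l2 t j)%:~R)).
rewrite /index_iota subn0; elim: (iota 0 k) => [|t s IHs]; first by rewrite big_nil.
by rewrite big_cons -IHs /= intrD intrM.
Qed.

Lemma mx_of_seqmx_tr m n l : mx (seqmx_tr m n l) = (mx l)^T :> 'M_(n, m).
Proof. by apply/matrixP=> i j; rewrite !mxE seqmx_get_of. Qed.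

Lemma mx_of_seqmx_scalar n c : mx (seqmx_scalar n c) = c%:R%:M :> 'M_n.
Proof.
apply/matrixP=> i j; rewrite !mxE seqmx_get_of // -[(i : nat) == j]/(i == j).
by case: eqVneq; rewrite -?pmulrn.
Qed.

Lemma mx_of_seqmx_addc n l c : mx (seqmx_addc n l c) = mx l + c%:R%:M :> 'M_n.
Proof. by rewrite mx_of_seqmxD mx_of_seqmx_scalar. Qed.

Lemma mx_of_seqmx_subc n l c : mx (seqmx_subc n l c) = mx l - c%:R%:M :> 'M_n.
Proof. by rewrite mx_of_seqmxB mx_of_seqmx_scalar. Qed.

Lemma mx_of_seqmx_delta m n (i : 'I_m) (j : 'I_n) c :
  mx (seqmx_delta m n i j c) = c%:~R *: delta_mx i j.
Proof.
apply/matrixP=> i' j'; rewrite !mxE seqmx_get_of //.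
rewrite -[(i' : nat) == i]/(i' == i) -[(j' : nat) == j]/(j' == j).
by case: eqVneq; case: eqVneq; rewrite ?mulr1 ?mulr0.
Qed.

End SeqmxMorphism.

Lemma pchar0_intr_eq0 (F : fieldType) (z : int) :
  [pchar F] =i pred0 -> (z%:~R == 0 :> F) = (z == 0).
Proof.
move=> charF0; case: z => k; first by rewrite -pmulrn (pcharf0P _).1.
by rewrite NegzE intrN oppr_eq0 -pmulrn (pcharf0P _).1.
Qed.

Lemma seqmx_lower_nz_unitmx (F : fieldType) n (l : seqmx) :
  [pchar F] =i pred0 -> seqmx_lower_nz n l -> mx_of_seqmx l \in @unitmx F n.
Proof.
move=> charF0 /allP low_l.
have {}low_l (i : 'I_n) : (seqmx_get l i i != 0) &&
    all (fun j => (i < j)%N ==> (seqmx_get l i j == 0)) (iota 0 n).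
  by apply: low_l; rewrite mem_iota ltn_ord.
rewrite unitmxE unitfE det_trig; last first.
  apply/is_trig_mxP=> i j lt_ij; rewrite mxE.
  have /andP[_ /allP/(_ j)] := low_l i.
  by rewrite mem_iota ltn_ord lt_ij => /(_ isT)/eqP->.
apply/prodf_neq0 => i _; rewrite mxE pchar0_intr_eq0 //.
by case/andP: (low_l i).
Qed.

Section CyclicVector.
Variables (F : fieldType) (n : nat).
Implicit Types (M : 'M[F]_n.+1) (v : 'cV[F]_n.+1) (p : {poly F}).

Definition krylov_mx M v : 'M_n.+1 := \matrix_(i < n.+1) (M ^+ i *m v)^T.

Lemma mul_krylov_mx M v (u : 'rV_n.+1) :
  u *m krylov_mx M v = (horner_mx M (rVpoly u) *m v)^T.
Proof.
rewrite mulmx_sum_row [rVpoly u]poly_def rmorph_sum /= mulmx_suml raddf_sum /=.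
apply: eq_bigr => i _.
by rewrite valK rowK horner_mxZ rmorphXn /= horner_mx_X -scalemxAl linearZ.
Qed.

Lemma horner_mx_krylov_eq0 M v p : krylov_mx M v \in unitmx ->
  (size p <= n.+1)%N -> horner_mx M p = 0 -> p = 0.
Proof.
move=> Kunit sz_p pM0; rewrite -(poly_rV_K sz_p).
have : poly_rV p *m krylov_mx M v = 0.
  by rewrite mul_krylov_mx poly_rV_K // pM0 mul0mx trmx0.
by move=> /(canRL (mulmxK Kunit)); rewrite mul0mx => ->; rewrite linear0.
Qed.

Lemma mxminpoly_krylov M v p : krylov_mx M v \in unitmx ->
  p \is monic -> size p = n.+2 -> horner_mx M p = 0 -> mxminpoly M = p.
Proof.
move=> Kunit mon_p sz_p pM0; have min_p := mxminpoly_min pM0.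
have sz_min : size (mxminpoly M) = n.+2.
  apply/eqP; rewrite eqn_leq -{1}sz_p dvdp_leq ?monic_neq0 //=.
  rewrite ltnNge; apply/negP => small.
  have /eqP := monic_neq0 (mxminpoly_monic M); apply.
  exact: horner_mx_krylov_eq0 Kunit small (mx_root_minpoly M).
apply/eqP; rewrite -eqp_monic ?mxminpoly_monic //.
by rewrite -dvdp_size_eqp // sz_min sz_p.
Qed.

Lemma krylov_mxZ a M v :
  krylov_mx (a *: M) v = diag_mx (\row_(i < n.+1) a ^+ i) *m krylov_mx M v.
Proof.
apply/row_matrixP=> i; rewrite row_mul row_diag_mx -scalemxAl -rowE !rowK mxE.
by rewrite exprZn -scalemxAl linearZ.
Qed.

Lemma unitmx_krylov_mxZ a M v : a != 0 ->
  (krylov_mx (a *: M) v \in unitmx) = (krylov_mx M v \in unitmx).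
Proof.
move=> a0; rewrite krylov_mxZ unitmx_mul unitmxE det_diag unitfE.
suff -> : \prod_i (\row_(i < n.+1) a ^+ i) 0 i != 0 by [].
by apply/prodf_neq0 => i _; rewrite mxE expf_neq0.
Qed.

Lemma krylov_mx_seqmx (L Lv : seqmx) :
  krylov_mx (mx_of_seqmx L) (mx_of_seqmx Lv) = mx_of_seqmx (seqmx_krylov n.+1 L Lv).
Proof.
have pow i : mx_of_seqmx L ^+ i *m mx_of_seqmx Lv =
             mx_of_seqmx (iter i (seqmx_mul n.+1 n.+1 1 L) Lv) :> 'cV[F]_n.+1.
  elim: i => [|i IHi]; first by rewrite mul1mx.
  by rewrite exprS -mulmxE -mulmxA IHi mx_of_seqmxM.
by apply/matrixP=> i j; rewrite mxE pow !mxE seqmx_get_of.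
Qed.

End CyclicVector.

Lemma not_diagonalizable_sq_dvd (F : fieldType) n (M : 'M[F]_n.+1) a :
  ('X - a%:P) ^+ 2 %| mxminpoly M -> ~ diagonalizable M.
Proof.
move=> sq_dvd /diagonalizableP[rs uniq_rs /(dvdp_trans sq_dvd) sq_dvd_rs].
have a_rs : a \in rs.
  rewrite -root_prod_XsubC -dvdp_XsubCl; apply: dvdp_trans sq_dvd_rs.
  by rewrite expr2 dvdp_mulIl.
move: sq_dvd_rs; rewrite (big_rem a a_rs) /= expr2 dvdp_mul2l ?polyXsubC_eq0 //.
by rewrite dvdp_XsubCl root_prod_XsubC mem_rem_uniqF.
Qed.

Section MatrixUnits.
Variable F : fieldType.

Lemma mul_delta_mx_row n (u : 'rV[F]_n) (k j : 'I_n) :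
  u *m delta_mx k j = u 0 k *: delta_mx 0 j.
Proof.
apply/rowP=> j'; rewrite !mxE (bigD1 k) //= big1 => [|k' ne_k'k]; last first.
  by rewrite mxE (negPf ne_k'k) mulr0.
by rewrite mxE eqxx addr0 mulr_natr.
Qed.

Lemma stablemx_delta_full m n (S : 'M[F]_(m, n)) :
  (forall k j, stablemx S (delta_mx k j)) -> S == 0 \/ row_full S.
Proof.
move=> S_delta; have [->|nzS] := eqVneq S 0; [by left | right].
have /existsP[[i k] /= Sik] : [exists ik : 'I_m * 'I_n, S ik.1 ik.2 != 0].
  apply: contraR nzS => /existsPn S0; apply/eqP/matrixP=> i k.
  by rewrite mxE; apply/eqP/negbNE/(S0 (i, k)).
rewrite -sub1mx; apply/row_subP=> j; rewrite row1.
have : (row i S *m delta_mx k j <= S)%MS.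
  by rewrite -row_mul; apply: submx_trans (row_sub i _) (S_delta k j).
by rewrite mul_delta_mx_row mxE (eqmx_scale _ Sik).
Qed.

Lemma stablemxZ m n (S : 'M[F]_(m, n)) (f : 'M_n) a :
  a != 0 -> stablemx S (a *: f) = stablemx S f.
Proof. by move=> a0; rewrite -scalemxAr (eqmx_scale _ a0). Qed.

Variables (n : nat) (S : 'M[F]_n).
Hypothesis charF0 : [pchar F] =i pred0.
Local Notation mx := (@mx_of_seqmx F n n).
Implicit Types L : seqmx.

Lemma stablemx_seqmx_addc L c : stablemx S (mx L) -> stablemx S (mx (seqmx_addc n L c)).
Proof. by move=> SL; rewrite mx_of_seqmx_addc stablemxD ?stablemxC. Qed.

Lemma stablemx_seqmx_subc L c : stablemx S (mx L) -> stablemx S (mx (seqmx_subc n L c)).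
Proof. by move=> SL; rewrite mx_of_seqmx_subc stablemxD ?stablemxN ?stablemxC. Qed.

Lemma stablemx_seqmx_mul L1 L2 :
  stablemx S (mx L1) -> stablemx S (mx L2) -> stablemx S (mx (seqmx_mul n n n L1 L2)).
Proof. by move=> S1 S2; rewrite mx_of_seqmxM stablemxM. Qed.

Lemma stablemx_seqmx_delta (i j : 'I_n) :
  stablemx S (delta_mx i j) -> stablemx S (mx (seqmx_delta n n i j 1)).
Proof. by rewrite mx_of_seqmx_delta scale1r. Qed.

Lemma stablemx_delta_seqmx L1 L2 (i j : 'I_n) (c : int) :
  stablemx S (mx L1) -> stablemx S (mx L2) ->
  c != 0 -> seqmx_mul n n n L1 L2 == seqmx_delta n n i j c -> stablemx S (delta_mx i j).
Proof.
move=> S1 S2 c0 /eqP mulL; have := stablemx_seqmx_mul S1 S2.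
by rewrite mulL mx_of_seqmx_delta stablemxZ // pchar0_intr_eq0.
Qed.

End MatrixUnits.

Lemma forall_ord5 (P : 'I_5 -> Prop) : P 0 -> P 1 -> P 2 -> P 3 -> P 4 -> forall k, P k.
Proof.
move=> P0 P1 P2 P3 P4 k; have : k \in [:: 0; 1; 2; 3; 4] by case: k => -[|[|[|[|[|//]]]]].
by rewrite !inE => /or4P[| | | /orP[|]] /eqP->.
Qed.

Section Homogeneity.
Variables (R : comPzRingType) (n : nat) (a : R).
Implicit Types X Y Z W : 'M[R]_n.

Lemma comm_opZ X Y : comm_op (a *: X) (a *: Y) = a ^+ 2 *: comm_op X Y.
Proof. by rewrite /comm_op -!scalemxAl -!scalemxAr !scalerA scalerBr. Qed.

Lemma racah_alphaZ X Y Z W :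
  racah_alpha (a *: X) (a *: Y) (a *: Z) (a *: W) = a ^+ 2 *: racah_alpha X Y Z W.
Proof.
by rewrite /racah_alpha comm_opZ -!scalemxAl -!scalemxAr !scalerA -expr2 -scalerDr -scalerBr.
Qed.

Lemma racah_betaZ X Y Z W :
  racah_beta (a *: X) (a *: Y) (a *: Z) (a *: W) = a ^+ 2 *: racah_beta X Y Z W.
Proof.
by rewrite /racah_beta comm_opZ -!scalemxAl -!scalemxAr !scalerA -expr2 -scalerDr -scalerBr.
Qed.

Lemma racah_gammaZ X Y Z W :
  racah_gamma (a *: X) (a *: Y) (a *: Z) (a *: W) = a ^+ 2 *: racah_gamma X Y Z W.
Proof.
by rewrite /racah_gamma comm_opZ -!scalemxAl -!scalemxAr !scalerA -expr2 -scalerDr -scalerBr.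
Qed.

End Homogeneity.

Definition rowsA : seqmx :=
  [:: [:: 15; 0; 0; 0; 0];
      [:: 4; 3; 0; 0; 0];
      [:: 0; 4; -1; 0; 0];
      [:: 0; 0; 4; 3; 0];
      [:: 0; 0; 0; 4; 15]].

Definition rowsB : seqmx :=
  [:: [:: 15; -36; 0; 0; 0];
      [:: 0; 3; -6; 0; 0];
      [:: 0; 0; -1; -6; 0];
      [:: 0; 0; 0; 3; -36];
      [:: 0; 0; 0; 0; 15]].

Definition rowsC : seqmx :=
  [:: [:: -9; 36; 0; 0; 0];
      [:: -4; 15; 6; 0; 0];
      [:: 0; -4; 23; 6; 0];
      [:: 0; 0; -4; 15; 36];
      [:: 0; 0; 0; -4; -9]].

Definition rowsD : seqmx :=
  [:: [:: 18; -54; 0; 0; 0];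
      [:: 6; -15; -3; 0; 0];
      [:: 0; 2; 0; 3; 0];
      [:: 0; 0; -2; 15; 54];
      [:: 0; 0; 0; -6; -18]].

Definition seqmx_racah_poly (L : seqmx) : seqmx :=
  let L3 := seqmx_subc 5 L 3 in let L15 := seqmx_subc 5 L 15 in
  seqmx_mul 5 5 5 (seqmx_mul 5 5 5 (seqmx_mul 5 5 5
    (seqmx_mul 5 5 5 (seqmx_addc 5 L 1) L3) L3) L15) L15.

Section RacahModule.
Variable F : fieldType.
Hypothesis charF0 : [pchar F] =i pred0.
Local Notation mx := (@mx_of_seqmx F 5 5).
Local Notation q := (4%:R^-1 : F).

Lemma four_neq0 : (4%:R : F) != 0.
Proof. by rewrite (pcharf0P _).1. Qed.

Lemma quarter_mxE rows : quarter_mx F rows = q *: mx rows.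
Proof. by apply/matrixP=> i j; rewrite !mxE mulrC. Qed.

Lemma mxA_seqmx : mxA F = q *: mx rowsA. Proof. exact: quarter_mxE. Qed.
Lemma mxB_seqmx : mxB F = q *: mx rowsB. Proof. exact: quarter_mxE. Qed.
Lemma mxC_seqmx : mxC F = q *: mx rowsC. Proof. exact: quarter_mxE. Qed.
Lemma mxD_seqmx : mxD F = q *: mx rowsD. Proof. exact: quarter_mxE. Qed.

Lemma racah_alpha_beta_gamma_eq0 :
  [/\ racah_alpha (mxA F) (mxB F) (mxC F) (mxD F) = 0,
      racah_beta (mxA F) (mxB F) (mxC F) (mxD F) = 0 &
      racah_gamma (mxA F) (mxB F) (mxC F) (mxD F) = 0].
Proof.
rewrite mxA_seqmx mxB_seqmx mxC_seqmx mxD_seqmx racah_alphaZ racah_betaZ racah_gammaZ.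
rewrite /racah_alpha /racah_beta /racah_gamma /comm_op.
by split; rewrite -!(mx_of_seqmxM, mx_of_seqmxB, mx_of_seqmxD) mx_of_seqmx_eq0 ?scaler0 //;
  vm_compute.
Qed.

(* With D = q D', 2 D = q^2 (8 D'), so [X, Y] = 2 D becomes [X', Y'] = 8 D'. *)
Lemma comm_op_eq2D (L1 L2 : seqmx) :
  seqmx_sub 5 5 (seqmx_mul 5 5 5 L1 L2) (seqmx_mul 5 5 5 L2 L1) == seqmx_scale 5 5 8 rowsD ->
  comm_op (q *: mx L1) (q *: mx L2) = 2%:R *: mxD F.
Proof.
move=> /eqP commL; rewrite mxD_seqmx comm_opZ /comm_op -!mx_of_seqmxM -mx_of_seqmxB.
rewrite commL mx_of_seqmxZ !scalerA; congr (_ *: _).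
by field; rewrite four_neq0.
Qed.

Lemma racah_module_ABCD : racah_module (mxA F) (mxB F) (mxC F) (mxD F).
Proof.
split.
  by rewrite mxA_seqmx mxB_seqmx mxC_seqmx; split; apply: comm_op_eq2D; vm_compute.
have [-> -> ->] := racah_alpha_beta_gamma_eq0.
have comm0 X : comm_op 0 X = 0 by rewrite /comm_op mul0mx mulmx0 subrr.
by split; split.
Qed.

Lemma racah_minpoly_monic : racah_minpoly F \is monic.
Proof. by rewrite /racah_minpoly !rpredM ?rpredX ?monicXsubC ?monicXaddC. Qed.

Lemma size_racah_minpoly : size (racah_minpoly F) = 6.
Proof.
by rewrite /racah_minpoly !size_Mmonic ?size_XaddC ?size_XsubC
  ?monic_neq0 ?rpredM ?rpredX ?monicXsubC ?monicXaddC.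
Qed.

Lemma racah_minpoly_sq_dvd : ('X - (3%:R / 4%:R)%:P) ^+ 2 %| racah_minpoly F.
Proof. by rewrite dvdp_mulr // dvdp_mull. Qed.

Lemma horner_mx_racah_minpoly n (N : 'M[F]_n.+1) :
  horner_mx (q *: N) (racah_minpoly F) =
  q ^+ 5 *: ((N + 1%:M) * (N - 3%:M) ^+ 2 * (N - 15%:M) ^+ 2).
Proof.
have shiftB c : horner_mx (q *: N) ('X - (c / 4%:R)%:P) = q *: (N - c%:M).
  by rewrite rmorphB /= horner_mx_X horner_mx_C scalerBr scale_scalar_mx mulrC.
have shiftD : horner_mx (q *: N) ('X + (1 / 4%:R)%:P) = q *: (N + 1%:M).
  by rewrite rmorphD /= horner_mx_X horner_mx_C scalerDr scale_scalar_mx mulrC.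
rewrite /racah_minpoly rmorphM rmorphM !rmorphXn /= shiftD !shiftB !exprZn.
by rewrite -!scalerAl -!scalerAr -scalerAl !scalerA -exprS -exprD.
Qed.

Lemma mx_of_seqmx_racah_poly (L : seqmx) :
  mx (seqmx_racah_poly L) = (mx L + 1%:M) * (mx L - 3%:M) ^+ 2 * (mx L - 15%:M) ^+ 2.
Proof.
rewrite /seqmx_racah_poly !mx_of_seqmxM mx_of_seqmx_addc !mx_of_seqmx_subc.
by rewrite !expr2 !mulrA -!mulmxE.
Qed.

(* [Lv] is the cyclic vector; [Q] only serves to make the Krylov matrix triangular. *)
Lemma mxminpoly_quarter_seqmx (L Lv Q : seqmx) :
  seqmx_racah_poly L == seqmx0 5 5 ->
  seqmx_lower_nz 5 (seqmx_mul 5 5 5 (seqmx_krylov 5 L Lv) Q) ->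
  mxminpoly (q *: mx L) = racah_minpoly F.
Proof.
move=> annih_L lower_KQ; apply: (@mxminpoly_krylov _ _ _ (mx_of_seqmx Lv)).
- rewrite unitmx_krylov_mxZ ?invr_neq0 ?four_neq0 // krylov_mx_seqmx.
  have := seqmx_lower_nz_unitmx charF0 lower_KQ.
  by rewrite mx_of_seqmxM unitmx_mul => /andP[].
- exact: racah_minpoly_monic.
- exact: size_racah_minpoly.
- by rewrite horner_mx_racah_minpoly -mx_of_seqmx_racah_poly mx_of_seqmx_eq0 ?scaler0.
Qed.

Lemma mxminpoly_A : mxminpoly (mxA F) = racah_minpoly F.
Proof.
rewrite mxA_seqmx.
by apply: (mxminpoly_quarter_seqmx (Lv := seqmx_delta 5 1 0 0 1) (Q := seqmx_scalar 5 1));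
  vm_compute.
Qed.

Lemma mxminpoly_B : mxminpoly (mxB F) = racah_minpoly F.
Proof.
rewrite mxB_seqmx.
by apply: (mxminpoly_quarter_seqmx (Lv := seqmx_delta 5 1 4 0 1) (Q := seqmx_antidiag 5));
  vm_compute.
Qed.

Lemma mxminpoly_C : mxminpoly (mxC F) = racah_minpoly F.
Proof.
rewrite mxC_seqmx.
by apply: (mxminpoly_quarter_seqmx (Lv := seqmx_delta 5 1 0 0 1) (Q := seqmx_scalar 5 1));
  vm_compute.
Qed.

Local Notation At := (seqmx_tr 5 5 rowsA).
Local Notation Bt := (seqmx_tr 5 5 rowsB).

Lemma stablemx_op_invariant_quarter (S : 'M[F]_5) L :
  op_invariant S (q *: mx L) -> stablemx S (mx (seqmx_tr 5 5 L)).
Proof.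
by rewrite /op_invariant linearZ /= stablemxZ ?invr_neq0 ?four_neq0 // mx_of_seqmx_tr.
Qed.

Lemma stablemx_delta_racah (S : 'M[F]_5) :
  stablemx S (mx At) -> stablemx S (mx Bt) -> forall k j, stablemx S (delta_mx k j).
Proof.
move=> SA SB; have SB3 := stablemx_seqmx_subc 3 SB.
have S40 : stablemx S (delta_mx 4 0).
  have SB113 := stablemx_seqmx_mul (stablemx_seqmx_mul (stablemx_seqmx_addc 1 SB) SB3) SB3.
  by apply: (stablemx_delta_seqmx charF0 (c := 6 ^+ 6)) SB113 (stablemx_seqmx_subc 15 SB) _ _;
    vm_compute.
have down L (k k' : 'I_5) : stablemx S (mx L) -> stablemx S (delta_mx k 0) ->
    seqmx_mul 5 5 5 L (seqmx_delta 5 5 k (0%R : 'I_5) 1)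
      == seqmx_delta 5 5 k' (0%R : 'I_5) 4 ->
    stablemx S (delta_mx k' 0).
  by move=> SL Sk /(stablemx_delta_seqmx charF0 (c := 4) SL (stablemx_seqmx_delta Sk) isT).
have right L (j j' : 'I_5) : stablemx S (mx L) -> stablemx S (delta_mx 0 j) ->
    seqmx_mul 5 5 5 (seqmx_delta 5 5 (0%R : 'I_5) j 1) L
      == seqmx_delta 5 5 (0%R : 'I_5) j' 4 ->
    stablemx S (delta_mx 0 j').
  by move=> SL Sj /(stablemx_delta_seqmx charF0 (c := 4) (stablemx_seqmx_delta Sj) SL isT).
have S30 : stablemx S (delta_mx 3 0).
  by apply: down (stablemx_seqmx_subc 15 SA) S40 _; vm_compute.
have S20 : stablemx S (delta_mx 2 0).
  by apply: down (stablemx_seqmx_subc 3 SA) S30 _; vm_compute.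
have S10 : stablemx S (delta_mx 1 0).
  by apply: down (stablemx_seqmx_addc 1 SA) S20 _; vm_compute.
have S00 : stablemx S (delta_mx 0 0).
  by apply: down (stablemx_seqmx_subc 3 SA) S10 _; vm_compute.
have S01 : stablemx S (delta_mx 0 1).
  by apply: right (stablemx_seqmx_subc 15 SA) S00 _; vm_compute.
have S02 : stablemx S (delta_mx 0 2).
  by apply: right (stablemx_seqmx_subc 3 SA) S01 _; vm_compute.
have S03 : stablemx S (delta_mx 0 3).
  by apply: right (stablemx_seqmx_addc 1 SA) S02 _; vm_compute.
have S04 : stablemx S (delta_mx 0 4).
  by apply: right (stablemx_seqmx_subc 3 SA) S03 _; vm_compute.
move=> k j; rewrite -(mul_delta_mx (0 : 'I_5)).
by apply: stablemxM; [move: k | move: j]; apply: forall_ord5.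
Qed.

Lemma racah_irreducible_ABCD : racah_irreducible (mxA F) (mxB F) (mxC F) (mxD F).
Proof.
split=> // S; rewrite mxA_seqmx mxB_seqmx => /stablemx_op_invariant_quarter SA
  /stablemx_op_invariant_quarter SB _ _.
exact/stablemx_delta_full/stablemx_delta_racah.
Qed.

End RacahModule.

Theorem mainTheorem19 (F : closedFieldType) (charF0 : [pchar F] =i pred0) :
  [/\ racah_module (mxA F) (mxB F) (mxC F) (mxD F),
      [/\ racah_alpha (mxA F) (mxB F) (mxC F) (mxD F) = 0,
          racah_beta (mxA F) (mxB F) (mxC F) (mxD F) = 0 &
          racah_gamma (mxA F) (mxB F) (mxC F) (mxD F) = 0],
      racah_irreducible (mxA F) (mxB F) (mxC F) (mxD F),
      [/\ mxminpoly (mxA F) = racah_minpoly F,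
          mxminpoly (mxB F) = racah_minpoly F &
          mxminpoly (mxC F) = racah_minpoly F]
    & [/\ ~ diagonalizable (mxA F), ~ diagonalizable (mxB F)
        & ~ diagonalizable (mxC F)]].
Proof.
have minA := mxminpoly_A charF0; have minB := mxminpoly_B charF0.
have minC := mxminpoly_C charF0.
have not_diag M : mxminpoly M = racah_minpoly F -> ~ diagonalizable M.
  move=> minM; apply: (@not_diagonalizable_sq_dvd _ _ _ (3%:R / 4%:R)).
  by rewrite minM racah_minpoly_sq_dvd.
split.
- exact: racah_module_ABCD charF0.
- exact: racah_alpha_beta_gamma_eq0.
- exact: racah_irreducible_ABCD charF0.
- by split.
- by split; apply: not_diag.
Qed.
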